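(* Let $p$ be a prime, $q=p^2$, for $a\in\mathbb{F}_q$ write $\bar a = a^p$, $N(a)=a^{p+1}$, let $Q = \{(a,b) \in \mathbb{F}_q^2 : N(a)+N(b)=1\}$ and for $x=(a,b)\in Q$ let $\ell_x = \{(a+t\bar b,\ b-t\bar a): t\in\mathbb{F}_q\}$. Define $$S' = \{(x,y) \in \mathbb{F}_q^2 \times \mathbb{F}_q^2 : x \in Q,\ y \in \ell_x\}.$$ Then $|S'| = q\,|Q|$, and $S'$ contains no three points of the form $(x,y),(x,y+d),(x+d,y')$ with $x,y,y' \in \mathbb{F}_q^2$ and $d \in \mathbb{F}_q^2\setminus\{0\}$. *)

From HB Require Import structures.
From mathcomp Require Import all_boot all_order all_algebra all_field.
Set Implicit Arguments. Unset Strict Implicit. Unset Printing Implicit Defensive.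
Import GRing.Theory.
Local Open Scope ring_scope.

Section Defs.
Variables (F : finFieldType) (p : nat).

Definition fbar (a : F) : F := a ^+ p.
Definition fnorm (a : F) : F := a ^+ p.+1.

Definition padd (x y : F * F) : F * F := (x.1 + y.1, x.2 + y.2).

Definition Qset : {set F * F} := [set x | fnorm x.1 + fnorm x.2 == 1].

Definition lineQ (x : F * F) : {set F * F} :=
  [set (x.1 + t * fbar x.2, x.2 - t * fbar x.1) | t : F].

Definition Sprime : {set (F * F) * (F * F)} :=
  [set xy | (xy.1 \in Qset) && (xy.2 \in lineQ xy.1)].

End Defs.

From HB Require Import structures.
From mathcomp Require Import all_boot all_order all_algebra all_field.
From mathcomp Require Import ring.
Set Implicit Arguments. Unset Strict Implicit. Unset Printing Implicit Defensive.
Local Open Scope ring_scope.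
Import GRing.Theory.

(* Over F_{p^2} the map a |-> a^p is an involutive field automorphism and N is
   its norm, so N is multiplicative. For x = (a,b) the direction
   (bar b, - bar a) of l_x is orthogonal to x for the Hermitian form, whence
   N(a + s bar b) + N(b - s bar a) = (N a + N b)(1 + N s). A line l_x
   therefore meets Q only at t = 0 (as N s = 0 forces s = 0), while the
   configuration (x,y), (x,y+d), (x+d,y') would place x + d in l_x n Q with
   d != 0. The count follows because t |-> x + t (bar b, - bar a) is
   injective for x in Q, which is nonzero. *)

Section Conjugation.
Variables (F : finFieldType) (p : nat).
Hypothesis pcharF : p \in [pchar F].

Lemma fbarD (u v : F) : fbar p (u + v) = fbar p u + fbar p v.
Proof. exact: (pFrobenius_autD_comm pcharF (mulrC u v)). Qed.

Lemma fbarN (u : F) : fbar p (- u) = - fbar p u.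
Proof. exact: (pFrobenius_autN pcharF u). Qed.

Lemma fbarM (u v : F) : fbar p (u * v) = fbar p u * fbar p v.
Proof. exact: exprMn. Qed.

Lemma fbar_eq0 (u : F) : (fbar p u == 0) = (u == 0).
Proof. by rewrite expf_eq0 prime_gt0 // (pcharf_prime pcharF). Qed.

Lemma fnormE (u : F) : fnorm p u = fbar p u * u.
Proof. exact: exprSr. Qed.

Lemma fnorm_eq0 (u : F) : (fnorm p u == 0) = (u == 0).
Proof. by rewrite fnormE mulf_eq0 fbar_eq0 orbb. Qed.

Hypothesis cardF : #|F| = (p ^ 2)%N.

Lemma fbarK : involutive (@fbar F p).
Proof. by move=> u; rewrite /fbar -exprM mulnn -cardF expf_card. Qed.

End Conjugation.

Section Lines.
Variables (F : finFieldType) (p : nat).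

Definition line_pt (x : F * F) (t : F) : F * F :=
  (x.1 + t * fbar p x.2, x.2 - t * fbar p x.1).

Definition line_dir (x : F * F) (s : F) : F * F :=
  (s * fbar p x.2, - (s * fbar p x.1)).

Lemma lineQE (x : F * F) : lineQ p x = [set line_pt x t | t : F].
Proof. by []. Qed.

Lemma in_Sprime (x y : F * F) :
  ((x, y) \in Sprime F p) = (x \in Qset F p) && (y \in lineQ p x).
Proof. by rewrite inE. Qed.

Lemma padd_line_dir (x : F * F) (s : F) : padd x (line_dir x s) = line_pt x s.
Proof. by []. Qed.

Lemma line_dir0 (x : F * F) : line_dir x 0 = (0, 0).
Proof. by rewrite /line_dir !mul0r oppr0. Qed.

Lemma padd_line_pt (x d : F * F) (t t' : F) :
  padd (line_pt x t) d = line_pt x t' -> d = line_dir x (t' - t).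
Proof.
case: d => d1 d2 [e1 e2]; rewrite /line_dir; congr pair.
  by apply: (addrI (x.1 + t * fbar p x.2)); rewrite e1; ring.
by apply: (addrI (x.2 - t * fbar p x.1)); rewrite e2; ring.
Qed.

Lemma Qset_neq0 (x : F * F) : x \in Qset F p -> (x.1 != 0) || (x.2 != 0).
Proof.
rewrite inE; apply: contraLR; rewrite negb_or !negbK => /andP[/eqP-> /eqP->].
by rewrite /fnorm !expr0n addr0 eq_sym oner_eq0.
Qed.

Hypothesis pcharF : p \in [pchar F].

Lemma line_pt_inj (x : F * F) : x \in Qset F p -> injective (line_pt x).
Proof.
move=> /Qset_neq0 x_neq0 t t' [e1 e2].
have e1' : (t - t') * fbar p x.2 = 0 by rewrite mulrBl (addrI _ e1) subrr.
have e2' : (t - t') * fbar p x.1 = 0.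
  by rewrite mulrBl (oppr_inj (addrI _ e2)) subrr.
apply/eqP; rewrite -subr_eq0; case/orP: x_neq0 => [a_neq0|b_neq0].
  by move/eqP: e2'; rewrite mulf_eq0 fbar_eq0 // (negPf a_neq0) orbF.
by move/eqP: e1'; rewrite mulf_eq0 fbar_eq0 // (negPf b_neq0) orbF.
Qed.

Lemma Sprime_imset :
  Sprime F p = [set (u.1, line_pt u.1 u.2) | u in setX (Qset F p) setT].
Proof.
apply/setP=> -[x y]; rewrite in_Sprime lineQE; apply/andP/imsetP.
  by case=> xQ /imsetP[t _ ->]; exists (x, t); rewrite ?in_setX ?xQ ?in_setT.
by case=> -[x' t] /setXP[x'Q _] [-> ->]; split; last exact: imset_f.
Qed.

Lemma card_Sprime : #|Sprime F p| = (#|F| * #|Qset F p|)%N.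
Proof.
rewrite Sprime_imset card_in_imset ?cardsX ?cardsT 1?mulnC //.
move=> -[x t] [x' t'] /setXP[xQ _] _ /eqP; rewrite xpair_eqE /=.
by case/andP=> /eqP<- /eqP/(line_pt_inj xQ)->.
Qed.

Hypothesis cardF : #|F| = (p ^ 2)%N.

Lemma fnorm_line_pt (x : F * F) (s : F) :
  fnorm p (line_pt x s).1 + fnorm p (line_pt x s).2
  = (fnorm p x.1 + fnorm p x.2) * (1 + fnorm p s).
Proof.
rewrite /line_pt /= !fnormE !(fbarD pcharF, fbarN pcharF, fbarM) !(fbarK cardF).
ring.
Qed.

Lemma line_pt_Qset (x : F * F) (s : F) :
  x \in Qset F p -> (line_pt x s \in Qset F p) = (s == 0).
Proof.
rewrite !inE fnorm_line_pt => /eqP->; rewrite mul1r -subr_eq0 addrC addKr.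
exact: fnorm_eq0.
Qed.

Lemma Sprime_corner_free (x y y' d : F * F) : d != (0, 0) ->
  ~ [/\ (x, y) \in Sprime F p, (x, padd y d) \in Sprime F p &
        (padd x d, y') \in Sprime F p].
Proof.
move=> d_neq0 []; rewrite !in_Sprime !lineQE.
case/andP=> xQ /imsetP[t _ ->] /andP[_ /imsetP[t' _ /padd_line_pt dE]] /andP[].
rewrite dE padd_line_dir line_pt_Qset // subr_eq0.
by move=> /eqP tt' _; move: d_neq0; rewrite dE tt' subrr line_dir0 => /eqP.
Qed.

End Lines.

Theorem mainTheorem4 (F : finFieldType) (p : nat) :
  prime p -> #|F| = (p ^ 2)%N ->
  #|Sprime F p| = (#|F| * #|Qset F p|)%N /\
  (forall (x y y' d : F * F), d != (0, 0) ->
     ~ [/\ (x, y) \in Sprime F p,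
           (x, padd y d) \in Sprime F p &
           (padd x d, y') \in Sprime F p]).
Proof.
move=> p_prime cardF; have pcharF := card_finPcharP cardF p_prime.
by split; [exact: card_Sprime | exact: Sprime_corner_free].
Qed.
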